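(* Let $X_1,\dots,X_n$ be features and $Y$ a target that is not a.s. constant, $\mathcal{F}=\{1,\dots,n\}$, and $i\in\mathcal{F}$. If $\mathrm{FI}(i)=1$, then $\mathrm{Dep}(X_i,Y)=1$ and $\mathrm{FI}(j)=0$ for every $j\in\mathcal{F}\setminus\{i\}$ (equivalently, every other feature $j$ satisfies $\mathrm{Dep}(S\cup\{j\},Y)=\mathrm{Dep}(S,Y)$ for all $S\subseteq\mathcal{F}\setminus\{j\}$).
   Context: All random variables are discrete with finite support and defined on a common probability space. For discrete random variables (or random vectors) $X$ and $Y$, define $$\mathrm{UD}(X,Y):=\sum_x p_X(x)\sum_y \bigl|p_{Y\mid X=x}(y)-p_Y(y)\bigr|,$$ and, when $Y$ is not almost surely constant, $\mathrm{Dep}(X,Y):=\mathrm{UD}(X,Y)/\mathrm{UD}(Y,Y)$. Given features $X_1,\dots,X_n$ with index set $\mathcal{F}=\{1,\dots,n\}$ and $S\subseteq\mathcal{F}$, write $X_S=(X_i)_{i\in S}$ ($X_\emptyset$ constant) and $\mathrm{Dep}(S,Y):=\mathrm{Dep}(X_S,Y)$. The Berkelmans–Pries feature importance is $$\mathrm{FI}(i):=\sum_{S\subseteq\mathcal{F}\setminus\{i\}}\frac{|S|!\,(n-|S|-1)!}{n!}\bigl(\mathrm{Dep}(S\cup\{i\},Y)-\mathrm{Dep}(S,Y)\bigr).$$ *)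

From mathcomp Require Import all_boot all_order all_algebra.
Set Implicit Arguments. Unset Strict Implicit. Unset Printing Implicit Defensive.
Import Order.TTheory GRing.Theory Num.Theory.
Local Open Scope ring_scope.

Section Defs.
Variables (R : realFieldType) (Omega : finType) (P : Omega -> R).

Definition pr (E : pred Omega) : R := \sum_(w | E w) P w.

Definition is_prob : Prop := (forall w, 0 <= P w) /\ \sum_w P w = 1.

Definition pmf (A : eqType) (X : Omega -> A) (x : A) : R := pr (fun w => X w == x).

Definition cond_pmf (A B : eqType) (X : Omega -> A) (Y : Omega -> B) (x : A) (y : B) : R :=
  pr (fun w => (X w == x) && (Y w == y)) / pmf X x.

Definition UD (A B : finType) (X : Omega -> A) (Y : Omega -> B) : R :=
  \sum_(x : A) pmf X x * \sum_(y : B) `|cond_pmf X Y x y - pmf Y y|.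

Definition Dep (A B : finType) (X : Omega -> A) (Y : Omega -> B) : R :=
  UD X Y / UD Y Y.

Definition as_constant (B : eqType) (Y : Omega -> B) : Prop :=
  exists y, pr (fun w => Y w == y) = 1.

Variables (n : nat) (T TY : finType) (X : 'I_n -> Omega -> T) (Y : Omega -> TY).

(* the random vector X_S = (X_i)_{i in S}; coordinates outside S are None,
   so X_emptyset is constant *)
Definition XS (S : {set 'I_n}) : Omega -> {ffun 'I_n -> option T} :=
  fun w => [ffun i => if i \in S then Some (X i w) else None].

Definition DepS (S : {set 'I_n}) : R := Dep (XS S) Y.

Definition FI (i : 'I_n) : R :=
  \sum_(S : {set 'I_n} | i \notin S)
     ((#|S|`! * (n - #|S| - 1)`!)%:R / (n`!)%:R) * (DepS (i |: S) - DepS S).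

End Defs.

(* Each term Dep(S ∪ {i}) - Dep(S) of FI(i) is at most 1, because 0 <= Dep <= 1
   (UD(X,Y) <= UD(Y,Y): writing p(x,y) for the joint law, each |p(x,y) - p(x)p(y)|
   is bounded by p(x,y)(1 - p(y)) + p(y)(p(x) - p(x,y)), whose sum over x is
   2 p(y)(1 - p(y)), and these are exactly the terms of UD(Y,Y)). The Shapley
   weights are positive and sum to 1, so FI(i) = 1 forces every term to equal 1,
   i.e. Dep(S) = [i \in S] for all S. Hence Dep(X_i, Y) = Dep({i}, Y) = 1, and for
   j <> i adding j to S never changes Dep(S), so FI(j) = 0. *)
From mathcomp Require Import all_boot all_order all_algebra.
From mathcomp Require Import ring lra zify.
Set Implicit Arguments. Unset Strict Implicit.
Import Order.TTheory GRing.Theory Num.Theory.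

Lemma sum_shapley_nat n (i : 'I_n) :
  \sum_(S : {set 'I_n} | i \notin S) #|S|`! * (n - #|S| - 1)`! = n`!.
Proof.
have cardS (S : {set 'I_n}) : #|S| < n.+1.
  by rewrite ltnS; apply: leq_trans (max_card _) _; rewrite card_ord.
rewrite (partition_big (fun S : {set 'I_n} => inord #|S| : 'I_n.+1) xpredT) //=.
have count_sets (k : 'I_n.+1) :
    #|[pred S : {set 'I_n} | (i \notin S) && (inord #|S| == k)]| = 'C(n.-1, k).
  have -> : n.-1 = #|[set~ i]| by rewrite cardsC1 card_ord.
  rewrite -cards_draws; apply: eq_card => S.
  by rewrite !inE subsetC sub1set inE -val_eqE /= inordK.
rewrite (eq_bigr (fun k : 'I_n.+1 => 'C(n.-1, k) * (k`! * (n - k - 1)`!))); last first.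
  move=> k _; rewrite (eq_bigr (fun _ => k`! * (n - k - 1)`!)); last first.
    by move=> S /andP[_ /eqP <-]; rewrite inordK.
  by rewrite -count_sets -sum_nat_const; apply: eq_bigl.
rewrite big_ord_recr /= bin_small ?muln0 ?addn0; last by clear cardS count_sets; case: n i => [[]|].
rewrite (eq_bigr (fun _ => n.-1`!)); last first.
  move=> k _; rewrite -(bin_fact (_ : (k <= n.-1)%N)); last by have := ltn_ord k; lia.
  by congr (_ * (_ * _`!)); lia.
by rewrite sum_nat_const card_ord; clear cardS count_sets; case: n i => [[]|].
Qed.

Local Open Scope ring_scope.

Lemma convex_comb_eq1 (R : numDomainType) (I : finType) (Q : pred I) (w d : I -> R) :
  (forall k, Q k -> 0 < w k) -> (forall k, Q k -> d k <= 1) ->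
  \sum_(k | Q k) w k = 1 -> \sum_(k | Q k) w k * d k = 1 ->
  forall k, Q k -> d k = 1.
Proof.
move=> w_gt0 d_le1 sum_w sum_wd k Qk.
have defect_ge0 l : Q l -> 0 <= w l * (1 - d l).
  by move=> Ql; rewrite mulr_ge0 ?subr_ge0 ?d_le1 // ltW ?w_gt0.
have defect_sum : \sum_(l | Q l) w l * (1 - d l) = 0.
  by under eq_bigr do rewrite mulrBr mulr1; rewrite sumrB sum_w sum_wd subrr.
move: (psumr_eq0P defect_ge0 defect_sum Qk) => /eqP.
by rewrite mulf_eq0 gt_eqF ?w_gt0 //= subr_eq0 => /eqP <-.
Qed.

Lemma norm_joint_sub_le (R : realFieldType) (a b q : R) :
  0 <= a <= b -> 0 <= q <= 1 -> `|a - b * q| <= a * (1 - q) + q * (b - a).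
Proof.
move=> /andP[a_ge0 a_le_b] /andP[q_ge0 q_le1].
have aq_ge0 : 0 <= a * (1 - q) by apply: mulr_ge0; lra.
have qba_ge0 : 0 <= q * (b - a) by apply: mulr_ge0; lra.
by rewrite ler_norml; apply/andP; split; nra.
Qed.

Section Dependency.
Variables (R : realFieldType) (Omega : finType) (P : Omega -> R).
Hypothesis HP : is_prob P.

Definition jpmf (A B : eqType) (X : Omega -> A) (Y : Omega -> B) x y :=
  pr P (fun w => (X w == x) && (Y w == y)).

Lemma eq_pr (E F : pred Omega) : E =1 F -> pr P E = pr P F.
Proof. exact: eq_bigl. Qed.

Lemma pr_ge0 E : 0 <= pr P E.
Proof. by apply: sumr_ge0 => w _; case: HP. Qed.

Lemma pr_le (E F : pred Omega) : (forall w, E w -> F w) -> pr P E <= pr P F.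
Proof.
move=> EF; rewrite /pr [leLHS]big_mkcond [leRHS]big_mkcond /=.
apply: ler_sum => w _; case: HP => P_ge0 _.
by case Ew: (E w); [rewrite (EF _ Ew) | case: (F w)].
Qed.

Lemma pr_le1 E : pr P E <= 1.
Proof. by case: HP => _ <-; apply: pr_le. Qed.

Lemma pmf_ge0 (A : eqType) (X : Omega -> A) x : 0 <= pmf P X x.
Proof. exact: pr_ge0. Qed.

Lemma pmf_le1 (A : eqType) (X : Omega -> A) x : pmf P X x <= 1.
Proof. exact: pr_le1. Qed.

Lemma sum_pr_fiber (A : finType) (X : Omega -> A) (E : pred Omega) :
  \sum_x pr P (fun w => (X w == x) && E w) = pr P E.
Proof.
rewrite /pr (exchange_big_dep E) /=; last by move=> x w _ /andP[].
apply: eq_bigr => w Ew; rewrite (big_pred1 (X w)) // => x.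
by rewrite /= Ew andbT eq_sym.
Qed.

Lemma sum_pmf (A : finType) (X : Omega -> A) : \sum_x pmf P X x = 1.
Proof.
case: HP => _ <-; rewrite -[RHS](sum_pr_fiber X xpredT).
by apply: eq_bigr => x _; apply: eq_pr => w; rewrite /= andbT.
Qed.

Lemma jpmf_le_pmf (A B : eqType) (X : Omega -> A) (Y : Omega -> B) x y :
  jpmf X Y x y <= pmf P X x.
Proof. by apply: pr_le => w /andP[]. Qed.

Lemma pmf_mul_cond_dist (A B : eqType) (X : Omega -> A) (Y : Omega -> B) x y :
  pmf P X x * `|cond_pmf P X Y x y - pmf P Y y| =
  `|jpmf X Y x y - pmf P X x * pmf P Y y|.
Proof.
have jpmf_le := jpmf_le_pmf X Y x y.
rewrite /cond_pmf -/(jpmf X Y x y); have [pX0|pX_neq0] := eqVneq (pmf P X x) 0.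
  have -> : jpmf X Y x y = 0 by apply/le_anti; rewrite -{1}pX0 jpmf_le pr_ge0.
  by rewrite pX0 !mul0r subrr normr0.
have -> : jpmf X Y x y - pmf P X x * pmf P Y y =
          pmf P X x * (jpmf X Y x y / pmf P X x - pmf P Y y) by field.
by rewrite normrM ger0_norm ?pr_ge0.
Qed.

Lemma UD_jpmf (A B : finType) (X : Omega -> A) (Y : Omega -> B) :
  UD P X Y = \sum_x \sum_y `|jpmf X Y x y - pmf P X x * pmf P Y y|.
Proof.
apply: eq_bigr => x _; rewrite mulr_sumr.
by apply: eq_bigr => y _; rewrite pmf_mul_cond_dist.
Qed.

Lemma jpmf_self (B : eqType) (Y : Omega -> B) y' y :
  jpmf Y Y y' y = if y' == y then pmf P Y y else 0.
Proof.
rewrite /jpmf; case: eqVneq => [->|ne]; first by apply: eq_pr => w; rewrite /= andbb.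
rewrite (@eq_pr _ xpred0) ?/pr ?big_pred0_eq // => w /=.
by case: eqVneq => // ->; rewrite (negbTE ne).
Qed.

Lemma UD_self (B : finType) (Y : Omega -> B) :
  UD P Y Y = \sum_y 2%:R * (pmf P Y y * (1 - pmf P Y y)).
Proof.
rewrite UD_jpmf exchange_big; apply: eq_bigr => y _.
rewrite (bigD1 y) //= (eq_bigr (fun y' => pmf P Y y' * pmf P Y y)); last first.
  move=> y' ne; rewrite jpmf_self (negbTE ne) sub0r normrN.
  by rewrite ger0_norm ?mulr_ge0 ?pr_ge0.
rewrite -mulr_suml jpmf_self eqxx.
have -> : \sum_(y' | y' != y) pmf P Y y' = 1 - pmf P Y y.
  by rewrite -(sum_pmf Y) [in RHS](bigD1 y) //= addrC addrK.
have py_ge0 := pmf_ge0 Y y; have py_le1 := pmf_le1 Y y.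
rewrite ger0_norm; first ring.
have : 0 <= pmf P Y y * (1 - pmf P Y y) by apply: mulr_ge0; lra.
nra.
Qed.

Lemma UD_le_self (A B : finType) (X : Omega -> A) (Y : Omega -> B) :
  UD P X Y <= UD P Y Y.
Proof.
rewrite UD_jpmf UD_self exchange_big /=; apply: ler_sum => y _.
set q := pmf P Y y.
apply: (@le_trans _ _ (\sum_x (jpmf X Y x y * (1 - q) + q * (pmf P X x - jpmf X Y x y)))).
  apply: ler_sum => x _; apply: norm_joint_sub_le.
    by rewrite pr_ge0 jpmf_le_pmf.
  by rewrite pr_ge0 pr_le1.
rewrite big_split /= -mulr_suml -mulr_sumr sumrB sum_pmf /jpmf sum_pr_fiber.
by rewrite -/(pmf P Y y) -/q -mulr2n mulr_natl.
Qed.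

Lemma UD_ge0 (A B : finType) (X : Omega -> A) (Y : Omega -> B) : 0 <= UD P X Y.
Proof. by apply: sumr_ge0 => x _; rewrite mulr_ge0 ?pr_ge0 ?sumr_ge0. Qed.

Lemma Dep_ge0 (A B : finType) (X : Omega -> A) (Y : Omega -> B) : 0 <= Dep P X Y.
Proof. by rewrite divr_ge0 ?UD_ge0. Qed.

Lemma Dep_le1 (A B : finType) (X : Omega -> A) (Y : Omega -> B) : Dep P X Y <= 1.
Proof.
rewrite /Dep; have := UD_ge0 Y Y; rewrite le_eqVlt => /orP[/eqP <-|UDY_gt0].
  by rewrite invr0 mulr0.
by rewrite ler_pdivrMr // mul1r UD_le_self.
Qed.

Lemma sum_pmf_mul (A : finType) (X : Omega -> A) (G : A -> R) :
  \sum_x pmf P X x * G x = \sum_w P w * G (X w).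
Proof.
rewrite /pmf /pr; under eq_bigr do rewrite mulr_suml.
rewrite (exchange_big_dep xpredT) //=; apply: eq_bigr => w _.
by rewrite (big_pred1 (X w)) // => x; rewrite /= eq_sym.
Qed.

Lemma UD_comp_inj (A C B : finType) (X : Omega -> A) (X' : Omega -> C)
    (f : A -> C) (Y : Omega -> B) :
  injective f -> X' =1 f \o X -> UD P X' Y = UD P X Y.
Proof.
move=> f_inj eqX'.
have fiber x (E : pred Omega) :
    pr P (fun w => (X' w == f x) && E w) = pr P (fun w => (X w == x) && E w).
  by apply: eq_pr => w; rewrite /= eqX' /= inj_eq.
have pmf_f x : pmf P X' (f x) = pmf P X x.
  by apply: eq_pr => w; rewrite /= eqX' /= inj_eq.
rewrite /UD !sum_pmf_mul; apply: eq_bigr => w _; rewrite eqX' /=.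
by under eq_bigr do rewrite /cond_pmf pmf_f fiber.
Qed.

End Dependency.

Definition shapley_weight (R : numFieldType) n (S : {set 'I_n}) : R :=
  (#|S|`! * (n - #|S| - 1)`!)%:R / (n`!)%:R.

Lemma shapley_weight_gt0 (R : numFieldType) n (S : {set 'I_n}) :
  0 < shapley_weight R S.
Proof. by apply: divr_gt0; rewrite ltr0n ?muln_gt0 ?fact_gt0. Qed.

Lemma sum_shapley_weight (R : numFieldType) n (i : 'I_n) :
  \sum_(S : {set 'I_n} | i \notin S) shapley_weight R S = 1.
Proof.
rewrite -mulr_suml -natr_sum sum_shapley_nat divff //.
by rewrite pnatr_eq0 -lt0n fact_gt0.
Qed.

Section FeatureImportance.
Variables (R : realFieldType) (Omega : finType) (P : Omega -> R).
Variables (n : nat) (T TY : finType) (X : 'I_n -> Omega -> T) (Y : Omega -> TY).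
Hypothesis HP : is_prob P.

Lemma DepS_ge0 S : 0 <= DepS P X Y S.
Proof. exact: Dep_ge0. Qed.

Lemma DepS_le1 S : DepS P X Y S <= 1.
Proof. exact: Dep_le1. Qed.

Lemma DepS_set1 i : DepS P X Y [set i] = Dep P (X i) Y.
Proof.
pose embed (t : T) : {ffun 'I_n -> option T} := [ffun k => if k == i then Some t else None].
have embed_inj : injective embed.
  by move=> a b /(congr1 (fun g : {ffun _} => g i)); rewrite !ffunE eqxx => -[].
rewrite /DepS /Dep (UD_comp_inj P (X := X i) (f := embed)) // => w.
by apply/ffunP => k; rewrite /XS /embed /= !ffunE in_set1; case: eqP => [->|].
Qed.

Lemma DepS_indicator_of_FI_eq1 i :
  FI P X Y i = 1 -> forall S, DepS P X Y S = (i \in S)%:R.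
Proof.
move=> FI_i.
have gain_eq1 : forall S : {set 'I_n}, i \notin S -> DepS P X Y (i |: S) - DepS P X Y S = 1.
  apply: (convex_comb_eq1 (w := @shapley_weight R n) _ _ _ FI_i).
  - by move=> S' _; exact: shapley_weight_gt0.
  - by move=> S' _; have := DepS_le1 (i |: S'); have := DepS_ge0 S'; lra.
  - exact: sum_shapley_weight.
have DepS_gain (S : {set 'I_n}) : i \notin S -> DepS P X Y (i |: S) = 1 /\ DepS P X Y S = 0.
  move=> iS; have := gain_eq1 S iS.
  by have := DepS_le1 (i |: S); have := DepS_ge0 S; split; lra.
move=> S; have [iS|iS] := boolP (i \in S); last by case: (DepS_gain S iS) => _ ->.
by rewrite -(setD1K iS); case: (DepS_gain (S :\ i)) => [|-> _] //; rewrite setD11.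
Qed.

End FeatureImportance.

Theorem mainTheorem9 (R : realFieldType) (Omega : finType) (P : Omega -> R)
  (n : nat) (T TY : finType) (X : 'I_n -> Omega -> T) (Y : Omega -> TY)
  (i : 'I_n) :
  is_prob P ->
  ~ as_constant P Y ->
  FI P X Y i = 1 ->
  Dep P (X i) Y = 1 /\ (forall j : 'I_n, j != i -> FI P X Y j = 0).
Proof.
move=> HP _ FI_i; have DepS_ind := DepS_indicator_of_FI_eq1 HP FI_i.
split; first by rewrite -DepS_set1 DepS_ind set11.
move=> j ji; apply: big1 => S _.
by rewrite !DepS_ind in_setU1 eq_sym (negbTE ji) subrr mulr0.
Qed.
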